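(* Let $q$ be a prime power with $q\equiv 3\pmod 4$, let $s\in\mathbb{N}$ be even, let $b\in\mathbb{F}_q^*$, and let $f(x)=x^s\left(x^{(q-1)/2}+b\right)\in\mathbb{F}_q[x]$. If $f$ is a permutation polynomial of $\mathbb{F}_q$, then $\delta_f\le 4s-3$.
   Context: A polynomial $f\in\mathbb{F}_q[x]$ is a permutation polynomial of $\mathbb{F}_q$ if $c\mapsto f(c)$ is a bijection of $\mathbb{F}_q$. For $a\in\mathbb{F}_q^*$, $\Delta_{f,a}(x)=f(x+a)-f(x)$, and the differential uniformity is $\delta_f=\max_{a\in\mathbb{F}_q^*,\,c\in\mathbb{F}_q}|\{x\in\mathbb{F}_q:\Delta_{f,a}(x)=c\}|$. *)

From HB Require Import structures.
From mathcomp Require Import all_boot all_order all_algebra all_field.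
Set Implicit Arguments. Unset Strict Implicit. Unset Printing Implicit Defensive.
Import GRing.Theory.
Local Open Scope ring_scope.

Definition is_perm_poly (F : finFieldType) (f : {poly F}) : Prop :=
  bijective (fun c : F => f.[c]).

Definition diff_count (F : finFieldType) (f : {poly F}) (a c : F) : nat :=
  #|[set x : F | f.[x + a] - f.[x] == c]|.

Definition diff_unif (F : finFieldType) (f : {poly F}) : nat :=
  \max_(a : F | a != 0) \max_(c : F) diff_count f a c.

(* Let qchar x = x ^+ ((q - 1) / 2) be the quadratic character of F, q = #|F|, so that
   qchar (-1) = -1 as q = 3 mod 4, and fix a != 0 and c.  A solution x of
   f (x + a) - f x = c with qchar (x + a) = e1 and qchar x = e2 (e1, e2 = +-1) is a root of
   the branch polynomial (e1 + b) (X + a)^s - (e2 + b) X^s - c, which has degree at most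
   s - 1 when e1 = e2 and at most s otherwise; the points 0 and -a, where qchar vanishes,
   are roots of two branch polynomials each.  Hence there are at most 4s - 2 solutions,
   and at most 4s - 3 unless all four branch polynomials split with roots of the
   prescribed character.  Then Vieta's formula for the constant terms, read through qchar,
   forces qchar (1 + b) = qchar (b - 1).  But f permutes F only if
   qchar (1 + b) qchar (b - 1) = -1: otherwise f would map F^* into a single class of
   qchar, which has only (q - 1) / 2 elements. *)

From HB Require Import structures.
From mathcomp Require Import all_boot all_order all_algebra all_field.
From mathcomp Require Import zify ring.
Import GRing.Theory.
Set Implicit Arguments. Unset Strict Implicit. Unset Printing Implicit Defensive.
Local Open Scope ring_scope.

Lemma card_roots_lt (R : finIdomainType) (p : {poly R}) (A : {pred R}) :
  p != 0 -> {in A, forall x, root p x} -> (#|A| < size p)%N.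
Proof.
move=> p_neq0 rootA; rewrite cardE max_poly_roots ?enum_uniq //.
by apply/allP => x; rewrite mem_enum; exact: rootA.
Qed.

Section QuadraticCharacter.

Variable F : finFieldType.
Hypothesis odd_card : odd #|F|.

Definition qchar (x : F) : F := x ^+ ((#|F| - 1) %/ 2).

Lemma qcharM (x y : F) : qchar (x * y) = qchar x * qchar y.
Proof. exact: exprMn. Qed.

Lemma half_card_gt0 : (0 < (#|F| - 1) %/ 2)%N.
Proof.
have card_gt1 : (1 < #|F|)%N.
  by rewrite (cardD1 0) (cardD1 1) !inE oner_neq0.
have : (#|F| %% 2 = 1)%N by rewrite modn2 odd_card.
lia.
Qed.

Lemma half_card_lt_pred : ((#|F| - 1) %/ 2 < #|F|.-1)%N.
Proof. have := half_card_gt0; rewrite -subn1; lia. Qed.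

Lemma qchar0 : qchar 0 = 0.
Proof. by rewrite /qchar expr0n gtn_eqF ?half_card_gt0. Qed.

Lemma qchar_sqr (x : F) : x != 0 -> qchar x ^+ 2 = 1.
Proof.
move=> x_neq0; apply: (mulIf x_neq0); rewrite mul1r -{3}(expf_card x).
have : (#|F| %% 2 = 1)%N by rewrite modn2 odd_card.
have := half_card_gt0; rewrite /qchar -exprM -exprSr => ? ?; congr (_ ^+ _); lia.
Qed.

Lemma qchar_sign (x : F) : x != 0 -> qchar x = 1 \/ qchar x = -1.
Proof. by move/qchar_sqr/eqP; rewrite sqrf_eq1 => /orP[] /eqP; [left | right]. Qed.

Lemma two_neq0 : (2 : F) != 0.
Proof.
apply/negP => /eqP two_eq0.
have pchar2 : (2 \in [pchar F])%N by rewrite inE /= two_eq0.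
have card_pow2 := card_pprimeChar pchar2.
have := odd_card; rewrite card_pow2 oddX orbF => /eqP n_eq0.
by move: half_card_gt0; rewrite card_pow2 n_eq0.
Qed.

Lemma oner_neqN1 : (1 : F) != -1.
Proof. by rewrite -subr_eq0 opprK; exact: two_neq0. Qed.

Lemma card_qchar_eq_le (e : F) : (#|[set x | qchar x == e]| <= (#|F| - 1) %/ 2)%N.
Proof.
have X_sub_neq0 : 'X^((#|F| - 1) %/ 2) - e%:P != 0.
  by rewrite monic_neq0 ?monicXnsubC ?half_card_gt0.
rewrite -ltnS -(size_XnsubC e half_card_gt0) card_roots_lt // => x.
by rewrite inE rootE !hornerE subr_eq0.
Qed.

End QuadraticCharacter.

Section QuadraticCharacterMod4.

Variable F : finFieldType.
Hypothesis card_mod4 : (#|F| %% 4 = 3)%N.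

Lemma qcharN1 : qchar (-1 : F) = -1.
Proof.
rewrite /qchar -signr_odd.
suff -> : odd ((#|F| - 1) %/ 2) by [].
have : ((#|F| - 1) %/ 2 %% 2 = 1)%N by lia.
by rewrite modn2; case: odd.
Qed.

(* Vieta's formula for the constant term, read through the quadratic character. *)
Lemma qchar_horner0_split (p : {poly F}) (A : {set F}) (e : F) :
    size p = #|A|.+1 ->
    {in A, forall x, root p x} -> {in A, forall x, qchar x = e} ->
  qchar p.[0] = qchar (lead_coef p) * (- e) ^+ #|A|.
Proof.
move=> size_p rootA qcharA.
have size_enum : size p = (size (enum A)).+1 by rewrite size_p cardE.
have roots_enum : all (root p) (enum A).
  by apply/allP => x; rewrite mem_enum; exact: rootA.
have uniq_enum : uniq_roots (enum A) by rewrite uniq_rootsE enum_uniq.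
rewrite {1}(all_roots_prod_XsubC size_enum roots_enum uniq_enum).
rewrite hornerZ horner_prod big_enum /= qcharM; congr (_ * _).
under eq_bigr do rewrite hornerXsubC add0r.
rewrite prodrN qcharM {1}/qchar exprAC -/(qchar (-1)) qcharN1.
rewrite /qchar -prodrXl (eq_bigr (fun=> e)) => [|x /qcharA //].
by rewrite prodr_const -exprMn mulN1r.
Qed.

End QuadraticCharacterMod4.

Lemma size_exp_XaddC (R : nzRingType) (a : R) n : size (('X + a%:P) ^+ n) = n.+1.
Proof. by rewrite -[a]opprK polyCN size_exp_XsubC. Qed.

Lemma coef_exp_XaddC_top (R : nzRingType) (a : R) n : (('X + a%:P) ^+ n)`_n = 1.
Proof.
have := monic_exp n (monicXaddC a).
by rewrite monicE lead_coefE size_exp_XaddC => /eqP.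
Qed.

Lemma size_exp_XaddC_subXn (R : nzRingType) (a : R) n :
  (size (('X + a%:P) ^+ n - 'X^n)%R <= n)%N.
Proof.
apply/leq_sizeP => j; rewrite leq_eqVlt coefB coefXn => /orP[/eqP <- | lt_nj].
  by rewrite coef_exp_XaddC_top eqxx subrr.
by rewrite gtn_eqF // nth_default ?subrr // size_exp_XaddC.
Qed.

Section DifferenceEquation.

Variables (F : finFieldType) (s : nat) (b : F).
Hypothesis card_mod4 : (#|F| %% 4 = 3)%N.
Hypothesis s_gt0 : (0 < s)%N.
Hypothesis s_even : ~~ odd s.

Let odd_card : odd #|F|.
Proof.
have : (#|F| %% 2 = 1)%N by lia.
by rewrite modn2; case: odd.
Qed.

Definition fval (x : F) : F := x ^+ s * (qchar x + b).

Lemma horner_fval (x : F) :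
  ('X^s * ('X^((#|F| - 1) %/ 2) + b%:P)).[x] = fval x.
Proof. by rewrite !hornerE. Qed.

Lemma fval0 : fval 0 = 0.
Proof. by rewrite /fval expr0n gtn_eqF // mul0r. Qed.

Lemma fvalE_qchar (y e : F) : (y == 0) || (qchar y == e) -> fval y = (e + b) * y ^+ s.
Proof.
case/orP => /eqP y_def; first by rewrite y_def fval0 expr0n gtn_eqF // mulr0.
by rewrite /fval y_def mulrC.
Qed.

Lemma qchar_fval (x : F) : x != 0 -> qchar (fval x) = qchar (qchar x + b).
Proof.
move=> x_neq0; rewrite /fval qcharM {1}/qchar exprAC -/(qchar x).
have [-> | ->] := qchar_sign odd_card x_neq0; first by rewrite expr1n mul1r.
by rewrite -signr_odd (negbTE s_even) mul1r.
Qed.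

Lemma qchar_fval_shift_neq : injective fval -> qchar (1 + b) != qchar (-1 + b).
Proof.
move=> fval_inj; apply/eqP => qchar_same.
have image_sub : fval @: [set~ 0] \subset [set y | qchar y == qchar (1 + b)].
  apply/subsetP => y /imsetP[x]; rewrite !inE => x_neq0 ->.
  rewrite qchar_fval //; have [-> | ->] := qchar_sign odd_card x_neq0 => //.
  by rewrite qchar_same.
have := leq_trans (subset_leq_card image_sub) (card_qchar_eq_le odd_card _).
by rewrite card_imset // cardsC1 leqNgt half_card_lt_pred.
Qed.

Lemma fval_inj_qchar_shift : injective fval -> qchar (1 + b) * qchar (-1 + b) = -1.
Proof.
move=> fval_inj.
have fval1 : fval 1 = 1 + b by rewrite /fval /qchar !expr1n mul1r.
have fvalN1 : fval (-1) = -1 + b.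
  by rewrite /fval qcharN1 // -signr_odd (negbTE s_even) mul1r.
have b1_neq0 : 1 + b != 0.
  by apply: contra_neq (@oner_neq0 F) => b1_eq0; apply: fval_inj; rewrite fval0 fval1.
have bN1_neq0 : -1 + b != 0.
  have N1_neq0 : (-1 : F) != 0 by rewrite oppr_eq0 oner_eq0.
  by apply: contra_neq N1_neq0 => bN1_eq0; apply: fval_inj; rewrite fval0 fvalN1.
have := qchar_fval_shift_neq fval_inj.
have [-> | ->] := qchar_sign odd_card b1_neq0;
  have [-> | ->] := qchar_sign odd_card bN1_neq0; rewrite ?eqxx ?mulN1r ?mul1r //.
Qed.

(* On the solutions x with qchar (x + a) = e1 and qchar x = e2, the equation
   fval (x + a) - fval x = c is polynomial. *)
Definition branch_poly (a c e1 e2 : F) : {poly F} :=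
  (e1 + b) *: ('X + a%:P) ^+ s - (e2 + b) *: 'X^s - c%:P.

Lemma horner_branch_poly (a c e1 e2 x : F) :
  (branch_poly a c e1 e2).[x] = (e1 + b) * (x + a) ^+ s - (e2 + b) * x ^+ s - c.
Proof. by rewrite !hornerE. Qed.

Lemma branch_polyE (a c e1 e2 : F) :
  branch_poly a c e1 e2 =
  (e1 - e2) *: ('X + a%:P) ^+ s + (e2 + b) *: (('X + a%:P) ^+ s - 'X^s) - c%:P.
Proof. by rewrite /branch_poly -!mul_polyC !rmorphD rmorphN /=; ring. Qed.

Lemma size_branch_poly (a c e1 e2 : F) : (size (branch_poly a c e1 e2) <= s.+1)%N.
Proof.
rewrite branch_polyE; apply: (leq_trans (size_polyD _ _)).
rewrite size_polyN size_polyC geq_max (leq_trans (leq_b1 _)) // andbT.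
apply: (leq_trans (size_polyD _ _)); rewrite geq_max.
rewrite (leq_trans (size_scale_leq _ _)) ?size_exp_XaddC //=.
by rewrite (leq_trans (size_scale_leq _ _)) // ltnW // ltnS size_exp_XaddC_subXn.
Qed.

Lemma size_branch_poly_diag (a c e : F) : (size (branch_poly a c e e) <= s)%N.
Proof.
rewrite branch_polyE subrr scale0r add0r; apply: (leq_trans (size_polyD _ _)).
rewrite size_polyN size_polyC geq_max (leq_trans (leq_b1 _)) // andbT.
exact: leq_trans (size_scale_leq _ _) (size_exp_XaddC_subXn _ _).
Qed.

Lemma coef_branch_poly_top (a c e1 e2 : F) : (branch_poly a c e1 e2)`_s = e1 - e2.
Proof.
rewrite branch_polyE coefB coefD !coefZ coefC gtn_eqF // coef_exp_XaddC_top.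
by rewrite [_`_s]nth_default ?size_exp_XaddC_subXn // mulr0 mulr1 addr0 subr0.
Qed.

Lemma coef_branch_poly_diag (a c e : F) : (1 < s)%N ->
  (branch_poly a c e e)`_s.-1 = (e + b) * (('X + a%:P) ^+ s - 'X^s)`_s.-1.
Proof.
move=> s_gt1; rewrite branch_polyE subrr scale0r add0r coefB coefZ coefC.
by rewrite -(subn1 s) gtn_eqF ?subr0 // subn_gt0.
Qed.

Lemma branch_poly_neq0 (a c e1 e2 : F) :
  a != 0 -> e1 + e2 + 2 * b != 0 -> branch_poly a c e1 e2 != 0.
Proof.
move=> a_neq0; apply: contra_neq => g_eq0.
have : (branch_poly a c e1 e2).[0] - (branch_poly a c e1 e2).[- a] =
       a ^+ s * (e1 + e2 + 2 * b).
  rewrite !horner_branch_poly add0r addNr expr0n gtn_eqF // mulr0n exprNn.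
  by rewrite -signr_odd (negbTE s_even) mul1r; ring.
rewrite g_eq0 !horner0 subrr => /esym/eqP.
by rewrite mulf_eq0 expf_eq0 (negbTE a_neq0) andbF => /eqP.
Qed.

Definition sol_set (a c : F) : {set F} := [set x | fval (x + a) - fval x == c].

Definition branch_set (a c e1 e2 : F) : {set F} :=
  [set x in sol_set a c |
     ((x + a == 0) || (qchar (x + a) == e1)) && ((x == 0) || (qchar x == e2))].

Arguments branch_poly (a c e1 e2)%_R.
Arguments branch_set (a c e1 e2)%_R.

Lemma root_branch_set (a c e1 e2 x : F) :
  x \in branch_set a c e1 e2 -> root (branch_poly a c e1 e2) x.
Proof.
rewrite /branch_set /sol_set !inE => /and3P[/eqP <- /fvalE_qchar -> /fvalE_qchar ->].
by rewrite rootE horner_branch_poly subrr.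
Qed.

Section Counting.

Variables a c : F.
Hypothesis a_neq0 : a != 0.
Hypothesis b_neq0 : b != 0.
Hypothesis qchar_shift : qchar (1 + b) * qchar (-1 + b) = -1.

Local Notation S := (sol_set a c).
Local Notation B := (branch_set a c).
Local Notation g := (branch_poly a c).

Lemma card_branch_set_lt (e1 e2 : F) : e1 \in [:: 1; -1] -> e2 \in [:: 1; -1] ->
  (#|B e1 e2| < size (g e1 e2))%N.
Proof.
have b1_neq0 : 1 + b != 0.
  by apply: contra_eq_neq qchar_shift => ->; rewrite qchar0 // mul0r eq_sym oppr_eq0 oner_eq0.
have bN1_neq0 : -1 + b != 0.
  by apply: contra_eq_neq qchar_shift => ->; rewrite qchar0 // mulr0 eq_sym oppr_eq0 oner_eq0.
move=> e1_sign e2_sign.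
have g_neq0 : g e1 e2 != 0.
  apply: branch_poly_neq0 => //; have two_neq0 := two_neq0 odd_card.
  move: e1_sign e2_sign; rewrite !inE => /orP[]/eqP-> /orP[]/eqP->.
  - by rewrite (_ : 1 + 1 + 2 * b = 2 * (1 + b)) ?mulf_neq0 //; ring.
  - by rewrite (_ : 1 - 1 + 2 * b = 2 * b) ?mulf_neq0 //; ring.
  - by rewrite (_ : -1 + 1 + 2 * b = 2 * b) ?mulf_neq0 //; ring.
  - by rewrite (_ : -1 - 1 + 2 * b = 2 * (-1 + b)) ?mulf_neq0 //; ring.
by rewrite card_roots_lt // => x; exact: root_branch_set.
Qed.

Lemma branch_set_size_bounds :
  [/\ #|B 1 1| < size (g 1 1) <= s, #|B 1 (-1)| < size (g 1 (-1)) <= s.+1,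
       #|B (-1) 1| < size (g (-1) 1) <= s.+1 & #|B (-1) (-1)| < size (g (-1) (-1)) <= s]%N.
Proof.
have sign1 : (1 : F) \in [:: 1; -1] by rewrite mem_head.
have signN1 : (-1 : F) \in [:: 1; -1] by rewrite !inE eqxx orbT.
by rewrite !card_branch_set_lt ?size_branch_poly_diag ?size_branch_poly.
Qed.

(* Every solution lies in exactly one branch set, except 0 and -a, which lie in two. *)
Lemma card_sol_set_le_branch_sets :
  (#|S| + #|S :&: [set 0; - a]%R| <= #|B 1 1| + #|B 1 (-1)| + #|B (-1) 1| + #|B (-1) (-1)|)%N.
Proof.
have card_sum (A : {set F}) : #|A| = (\sum_x (x \in A : nat))%N.
  by rewrite -sum1_card big_mkcond.
rewrite !card_sum -!big_split /=; apply: leq_sum => x _.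
have [one_eqN1 N1_eq1] : ((1 : F) == -1) = false /\ ((-1 : F) == 1) = false.
  by split; [|rewrite eq_sym]; exact: negbTE (oner_neqN1 odd_card).
rewrite /branch_set /sol_set !inE; case: (_ == c) => //=.
have [-> | x_neq0] := eqVneq x 0.
  rewrite add0r (negbTE a_neq0) /=.
  by have [-> | ->] := qchar_sign odd_card a_neq0; rewrite !eqxx ?one_eqN1 ?N1_eq1.
have [-> | x_neqNa] := eqVneq x (- a).
  have Na_neq0 : - a != 0 by rewrite oppr_eq0.
  rewrite addNr eqxx /=.
  by have [-> | ->] := qchar_sign odd_card Na_neq0; rewrite !eqxx ?one_eqN1 ?N1_eq1.
have xa_neq0 : x + a != 0 by rewrite addr_eq0.
rewrite (negbTE xa_neq0) /=.
by have [-> | ->] := qchar_sign odd_card xa_neq0; have [-> | ->] := qchar_sign odd_card x_neq0;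
  rewrite !eqxx ?one_eqN1 ?N1_eq1.
Qed.

Lemma qchar_branch_poly0 (e1 e2 : F) : 0 \notin S -> size (g e1 e2) = #|B e1 e2|.+1 ->
  qchar ((e1 + b) * a ^+ s - c) = qchar (lead_coef (g e1 e2)) * (- e2) ^+ #|B e1 e2|.
Proof.
move=> S0 size_g.
have qcharB : {in B e1 e2, forall x, qchar x = e2}.
  move=> x; rewrite /branch_set inE => /and3P[x_sol _ /orP[/eqP x_eq0 | /eqP //]].
  by move: S0; rewrite -x_eq0 x_sol.
rewrite -(qchar_horner0_split card_mod4 size_g (@root_branch_set _ _ _ _) qcharB).
by rewrite horner_branch_poly add0r expr0n gtn_eqF // mulr0n mulr0 subr0.
Qed.

(* Full branch sets make all four branch polynomials split with roots of known
   character, and Vieta then gives qchar (1 + b) = qchar (-1 + b) = - qchar 2 * qchar L,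
   with L the coefficient of X^(s-1) in (X + a)^s - X^s; this contradicts qchar_shift. *)
Lemma branch_sets_not_full : 0 \notin S ->
  #|B 1 1| = s.-1 -> #|B 1 (-1)| = s -> #|B (-1) 1| = s -> #|B (-1) (-1)| = s.-1 -> False.
Proof.
move=> S0 card11 card1N cardN1 cardNN.
have s_gt1 : (1 < s)%N by case: s s_gt0 s_even => [|[]].
have [/andP[lt11 le11] /andP[lt1N le1N] /andP[ltN1 leN1] /andP[ltNN leNN]] :=
  branch_set_size_bounds.
have size11 : size (g 1 1) = #|B 1 1|.+1 by lia.
have sizeNN : size (g (-1) (-1)) = #|B (-1) (-1)|.+1 by lia.
have size1N : size (g 1 (-1)) = #|B 1 (-1)|.+1 by lia.
have sizeN1 : size (g (-1) 1) = #|B (-1) 1|.+1 by lia.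
pose L := (('X + a%:P) ^+ s - 'X^s)`_s.-1.
have lead11 : lead_coef (g 1 1) = (1 + b) * L.
  by rewrite lead_coefE size11 card11 coef_branch_poly_diag.
have leadNN : lead_coef (g (-1) (-1)) = (-1 + b) * L.
  by rewrite lead_coefE sizeNN cardNN coef_branch_poly_diag.
have L_neq0 : L != 0.
  have : lead_coef (g 1 1) != 0 by rewrite lead_coef_eq0 -size_poly_gt0 size11.
  by rewrite lead11 mulf_eq0 negb_or => /andP[].
have odd_s1 : odd s.-1 by rewrite -subn1 oddB ?s_gt0 // addbT s_even.
have qcharN2 : qchar (-1 - 1 : F) = - qchar (1 + 1).
  by rewrite (_ : -1 - 1 = -1 * (1 + 1)) ?qcharM ?qcharN1 ?mulN1r //; ring.
have V11 := qchar_branch_poly0 S0 size11.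
have V1N := qchar_branch_poly0 S0 size1N.
have VN1 := qchar_branch_poly0 S0 sizeN1.
have VNN := qchar_branch_poly0 S0 sizeNN.
rewrite lead_coefE size1N card1N coef_branch_poly_top opprK expr1n mulr1 in V1N.
rewrite lead11 card11 qcharM -signr_odd odd_s1 expr1 V1N in V11.
rewrite lead_coefE sizeN1 cardN1 coef_branch_poly_top qcharN2 in VN1.
rewrite -signr_odd (negbTE s_even) mulr1 in VN1.
rewrite leadNN qcharM opprK expr1n mulr1 in VNN.
have qchar2_sqr : qchar (1 + 1 : F) ^+ 2 = 1.
  by apply: (qchar_sqr odd_card); rewrite -mulr2n; exact: two_neq0.
have E1 : qchar (1 + b) * qchar L = - qchar (1 + 1) by rewrite V11 mulrN1 opprK.
have E2 : qchar (-1 + b) * qchar L = - qchar (1 + 1) by rewrite -VNN VN1.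
have : qchar (1 + b) * qchar (-1 + b) * qchar L ^+ 2 = qchar (1 + 1) ^+ 2.
  transitivity ((qchar (1 + b) * qchar L) * (qchar (-1 + b) * qchar L)); first by ring.
  by rewrite E1 E2; ring.
rewrite qchar_shift qchar_sqr // qchar2_sqr mulr1 => /eqP.
by rewrite eq_sym (negbTE (oner_neqN1 odd_card)).
Qed.

Lemma card_sol_set_le : (#|S| <= 4 * s - 3)%N.
Proof.
have le_sum := card_sol_set_le_branch_sets.
have [/andP[lt11 le11] /andP[lt1N le1N] /andP[ltN1 leN1] /andP[ltNN leNN]] :=
  branch_set_size_bounds.
have [ends0 | ends_gt0] := posnP #|S :&: [set 0; - a]|; last by lia.
have S0 : 0 \notin S.
  by apply/negP => S0; move: ends0; rewrite (cardD1 0) in_setI S0 in_set2 eqxx.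
rewrite leqNgt; apply/negP => S_gt.
by apply: (branch_sets_not_full S0); lia.
Qed.

End Counting.

End DifferenceEquation.

Theorem theorem1p2 (F : finFieldType) (s : nat) (b : F) :
  (#|F| %% 4 = 3)%N -> (0 < s)%N -> ~~ odd s -> b != 0 ->
  is_perm_poly ('X^s * ('X^((#|F| - 1) %/ 2) + b%:P)) ->
  (diff_unif ('X^s * ('X^((#|F| - 1) %/ 2) + b%:P)) <= 4 * s - 3)%N.
Proof.
move=> card_mod4 s_gt0 s_even b_neq0 /bij_inj f_inj.
have fval_inj : injective (fval s b) := eq_inj f_inj (horner_fval s b).
have qchar_shift := fval_inj_qchar_shift card_mod4 s_gt0 s_even fval_inj.
apply/bigmax_leqP => a a_neq0; apply/bigmax_leqP => c _.
rewrite /diff_count; under eq_finset => x do rewrite !horner_fval.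
exact: card_sol_set_le.
Qed.
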